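(* Let $\Gamma=(V,E)$ be a metric graph with $V=\{v_1,\dots,v_n\}$ and $E=\{e_1,\dots,e_m\}$, where $e_j$ has endpoints $v_{j(1)},v_{j(2)}$ ($1\le j(1),j(2)\le n$) and length $M_j>0$. Let $D$ be a vertex-supported divisor on $\Gamma$ with $d_i=D(v_i)$. Let $f$ be a rational function on $\Gamma$ with at most two linear pieces on each edge of $\Gamma$; write $a_i=f(v_i)$, and let $s_{j,1},s_{j,2}$ be the outgoing slopes of $f$ along $e_j$ at $v_{j(1)}$ and at $v_{j(2)}$ respectively. Then $f\in R(D)$ if and only if (a) for each $1\le i\le n$: $d_i+\sum_{j:\,j(1)=i}s_{j,1}+\sum_{j:\,j(2)=i}s_{j,2}\ge 0$; and (b) for each $1\le j\le m$, either $s_{j,1}+s_{j,2}=0$ and $a_{j(1)}-a_{j(2)}+s_{j,1}M_j=0$, or $s_{j,1}+s_{j,2}<0$ and $s_{j,2}M_j<a_{j(1)}-a_{j(2)}<-s_{j,1}M_j$.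
   Context: A metric graph is a connected undirected graph (loops and parallel edges allowed) whose edges have positive real lengths, each edge viewed as a real segment. A divisor is a finite formal $\mathbb{Z}$-combination of points of $\Gamma$; it is vertex-supported if its support is contained in $V$. A rational function is a continuous $f:\Gamma\to\mathbb{R}$, piecewise linear on each edge with finitely many pieces and integer slopes; $\mathrm{ord}_x(f)$ is the sum of the outgoing slopes of $f$ at $x$ over all directions, and $(f)=\sum_x\mathrm{ord}_x(f)x$. $R(D)$ is the set of rational functions $f$ such that $D+(f)$ is effective (all coefficients $\ge 0$). *)

From Stdlib Require Import ClassicalEpsilon.
From mathcomp Require Import all_boot all_order all_algebra.
From mathcomp Require Import reals.
Set Implicit Arguments. Unset Strict Implicit. Unset Printing Implicit Defensive.
Import Order.TTheory GRing.Theory Num.Theory.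
Local Open Scope ring_scope.

(* A metric graph: vertices 'I_nv, edges 'I_ne, edge j goes from src j to
   tgt j (loops and parallel edges allowed) and has length len j > 0.
   Edge j is identified with the segment [0, len j], 0 <-> src j. *)
Record mgraph (R : realType) := MGraph {
  nv : nat;
  ne : nat;
  src : 'I_ne -> 'I_nv;
  tgt : 'I_ne -> 'I_nv;
  len : 'I_ne -> R;
  len_gt0 : forall j, 0 < len j }.

Section MetricGraph.
Variables (R : realType) (G : mgraph R).

Definition adj : rel 'I_(nv G) := fun u v =>
  [exists j, ((src j == u) && (tgt j == v)) || ((src j == v) && (tgt j == u))].

Definition connected_mgraph : Prop := forall u v, connect adj u v.

(* Points of Gamma: vertices, and interior points (j, t) with 0 < t < len j. *)
Inductive point := Vtx of 'I_(nv G) | Inn of 'I_(ne G) & R.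

Definition valid_point (x : point) : Prop :=
  match x with Vtx _ => True | Inn j t => 0 < t < len j end.

Definition pt (j : 'I_(ne G)) (t : R) : point :=
  if t <= 0 then Vtx (src j) else if len j <= t then Vtx (tgt j) else Inn j t.

(* Divisors: Z-valued functions on points (finite support is automatic for
   vertex-supported ones, the only ones used here). *)
Definition divisor := point -> int.
Definition vertex_supported (D : divisor) : Prop := forall j t, D (Inn j t) = 0.

Definition edgef (f : point -> R) (j : 'I_(ne G)) : R -> R := fun t => f (pt j t).

Definition pl_pieces (g : R -> R) (L : R) (k : nat) : Prop :=
  exists (x : nat -> R) (sl : nat -> int),
    [/\ x 0%N = 0, x k = L, (forall l, (l < k)%N -> x l < x l.+1) &
        forall l, (l < k)%N -> forall t, x l <= t <= x l.+1 ->
          g t = g (x l) + (sl l)%:~R * (t - x l)].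

Definition rational_function (f : point -> R) : Prop :=
  forall j, exists k, pl_pieces (edgef f j) (len j) k.

Definition at_most_two_pieces (f : point -> R) : Prop :=
  forall j, exists k, (k <= 2)%N /\ pl_pieces (edgef f j) (len j) k.

(* outgoing slope of g at t in the positive direction (intrinsic; unique for
   piecewise linear g) *)
Definition rslope (g : R -> R) (t : R) : int :=
  epsilon (inhabits 0%R) (fun s : int => exists e : R, 0 < e /\
    forall h, 0 < h < e -> g (t + h) = g t + s%:~R * h).

Definition slope1 (f : point -> R) (j : 'I_(ne G)) : int := rslope (edgef f j) 0.
Definition slope2 (f : point -> R) (j : 'I_(ne G)) : int :=
  rslope (fun t => edgef f j (len j - t)) 0.

(* ord_x(f) : sum of the outgoing slopes of f at x over all directions *)
Definition ord (f : point -> R) (x : point) : int :=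
  match x with
  | Vtx i => \sum_(j | src j == i) slope1 f j + \sum_(j | tgt j == i) slope2 f j
  | Inn j t => rslope (edgef f j) t + rslope (fun u => edgef f j (t - u)) 0
  end.

Definition in_RD (D : divisor) (f : point -> R) : Prop :=
  forall x, valid_point x -> 0 <= D x + ord f x.

End MetricGraph.

(* On an edge, a function with at most two linear pieces is affine with slope s0
   up to a breakpoint p and with slope s1 after it.  Its order vanishes at every
   interior point except p, where it is s1 - s0, so the interior part of the
   condition D + (f) >= 0 reduces to s0 <= s1; since the value drop along the
   edge is a convex combination of the two slopes times the length, this is
   exactly condition (b).  At vertices, condition (a) is the definition of
   D + (f) >= 0. *)
From mathcomp Require Import all_boot all_order all_algebra.
From mathcomp Require Import reals.
From mathcomp Require Import ring lra.
From Stdlib Require Import ClassicalEpsilon.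
Set Implicit Arguments. Unset Strict Implicit. Unset Printing Implicit Defensive.
Import Order.TTheory GRing.Theory Num.Theory.
Local Open Scope ring_scope.

Section Slopes.
Variable R : realType.

Lemma rslope_eq (g : R -> R) (t : R) (s : int) (e : R) : 0 < e ->
  (forall h, 0 < h < e -> g (t + h) = g t + s%:~R * h) -> rslope g t = s.
Proof.
move=> e_gt0 gE; rewrite /rslope.
have [e' [e'_gt0 gE']] := epsilon_spec (inhabits 0%R)
  (fun s' : int => exists e, 0 < e /\
     forall h, 0 < h < e -> g (t + h) = g t + s'%:~R * h)
  (ex_intro _ s (ex_intro _ e (conj e_gt0 gE))).
set s' := epsilon _ _ in gE' *.
pose h := Num.min e e' / 2.
have minE : 0 < Num.min e e' <= e /\ Num.min e e' <= e'.
  by rewrite lt_min e_gt0 e'_gt0 !ge_min !lexx ?orbT.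
have he : 0 < h < e by apply/andP; split; rewrite /h; lra.
have he' : 0 < h < e' by apply/andP; split; rewrite /h; lra.
have := gE _ he; rewrite gE' // => /addrI /mulIf eq_s.
by apply: intr_inj; apply: eq_s; rewrite /h; lra.
Qed.

Definition affine_on (g : R -> R) (a b : R) (s : int) :=
  forall u, a <= u <= b -> g u = g a + s%:~R * (u - a).

Lemma rslope_affine (g : R -> R) (a b : R) (s : int) (t : R) :
  affine_on g a b s -> a <= t < b -> rslope g t = s.
Proof.
move=> gE /andP[a_t t_b]; apply: (@rslope_eq _ _ _ (b - t)); first lra.
move=> h /andP[h0 hb]; rewrite gE ?(gE t); first ring.
- by apply/andP; split; lra.
- by apply/andP; split; lra.
Qed.

Lemma rslope_reflect_affine (g : R -> R) (a b : R) (s : int) (t : R) :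
  affine_on g a b s -> a < t <= b -> rslope (fun u => g (t - u)) 0 = - s.
Proof.
move=> gE /andP[a_t t_b]; apply: (@rslope_eq _ _ _ (t - a)); first lra.
move=> h /andP[h0 ha]; rewrite /= add0r subr0 gE ?(gE t) ?intrN; first ring.
- by apply/andP; split; lra.
- by apply/andP; split; lra.
Qed.

Definition two_pieces (g : R -> R) (L p : R) (s0 s1 : int) :=
  [/\ 0 < p < L, affine_on g 0 p s0 & affine_on g p L s1].

Lemma pl_pieces_le2 (g : R -> R) (L : R) (k : nat) :
  0 < L -> (k <= 2)%N -> pl_pieces g L k -> exists p s0 s1, two_pieces g L p s0 s1.
Proof.
move=> L_gt0 k_le2 [x [sl [x0 xk x_incr gE]]].
have piece l : (l < k)%N -> affine_on g (x l) (x l.+1) (sl l) by exact: gE.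
case: k k_le2 xk x_incr piece {gE} => [|[|[|k]]] // _ xk x_incr piece.
- by move: L_gt0; rewrite -xk x0 ltxx.
- (* a single piece is split at its midpoint *)
  have g_affine : affine_on g 0 L (sl 0%N) by rewrite -x0 -xk; apply: piece.
  exists (L / 2), (sl 0%N), (sl 0%N); split.
  + by apply/andP; split; lra.
  + by move=> u /andP[u0 uL]; apply: g_affine; apply/andP; split; lra.
  + move=> u /andP[u0 uL].
    rewrite g_affine ?(g_affine (L / 2)); first ring.
    * by apply/andP; split; lra.
    * by apply/andP; split; lra.
- exists (x 1%N), (sl 0%N), (sl 1%N); split.
  + by have := x_incr 0%N isT; have := x_incr 1%N isT; rewrite x0 xk => -> ->.
  + by rewrite -x0; apply: piece.
  + by rewrite -xk; apply: piece.
Qed.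

Section TwoPieces.
Variables (g : R -> R) (L p : R) (s0 s1 : int).
Hypothesis g2 : two_pieces g L p s0 s1.

Let p_gt0 : 0 < p. Proof. by case: g2 => /andP[]. Qed.
Let p_ltL : p < L. Proof. by case: g2 => /andP[]. Qed.

Lemma two_pieces_rslope0 : rslope g 0 = s0.
Proof. by case: g2 => _ gE _; apply: rslope_affine gE _; rewrite lexx p_gt0. Qed.

Lemma two_pieces_rslope_reflect : rslope (fun t => g (L - t)) 0 = - s1.
Proof.
by case: g2 => _ _ gE; apply: rslope_reflect_affine gE _; rewrite p_ltL lexx.
Qed.

Lemma two_pieces_ord (t : R) : 0 < t < L ->
  rslope g t + rslope (fun u => g (t - u)) 0 = if t == p then s1 - s0 else 0.
Proof.
case: g2 => _ gE0 gE1 /andP[t_gt0 t_ltL].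
have [t_ltp|p_ltt|->] := ltgtP t p.
- rewrite (rslope_affine gE0) ?(rslope_reflect_affine gE0) ?subrr //.
  + by rewrite t_gt0 ltW.
  + by rewrite ltW.
- rewrite (rslope_affine gE1) ?(rslope_reflect_affine gE1) ?subrr //.
  + by rewrite p_ltt ltW.
  + by rewrite ltW.
- rewrite (rslope_affine gE1) ?(rslope_reflect_affine gE0) //.
  + by rewrite p_gt0 lexx.
  + by rewrite lexx p_ltL.
Qed.

Lemma two_pieces_drop : g 0 - g L = - s0%:~R * p - s1%:~R * (L - p).
Proof.
case: g2 => _ gE0 gE1.
rewrite (gE1 L) ?(gE0 p) ?lexx ?(ltW p_gt0) ?(ltW p_ltL) //; ring.
Qed.

(* Both disjuncts force s0 <= s1; conversely the drop between the endpoints is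
   then forced by [two_pieces_drop]. *)
Lemma two_pieces_interior_ord_ge0 :
  (forall t, 0 < t < L -> 0 <= rslope g t + rslope (fun u => g (t - u)) 0) <->
  let s1' := rslope g 0 in
  let s2' := rslope (fun t => g (L - t)) 0 in
  (s1' + s2' = 0 /\ g 0 - g L + s1'%:~R * L = 0) \/
  (s1' + s2' < 0 /\ s2'%:~R * L < g 0 - g L < - s1'%:~R * L).
Proof.
rewrite /= two_pieces_rslope0 two_pieces_rslope_reflect two_pieces_drop intrN.
split=> [ord_ge0 | slopes].
- have := ord_ge0 p; rewrite two_pieces_ord ?eqxx p_gt0 p_ltL => // /(_ isT).
  rewrite subr_ge0 le_eqVlt => /orP[/eqP s_eq | s_lt].
  + by left; rewrite s_eq subrr; split => //; ring.
  + right; rewrite subr_lt0 s_lt; split => //.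
    have s_ltR : s0%:~R < s1%:~R :> R by rewrite ltr_int.
    have q0 : 0 < (s1%:~R - s0%:~R) * p :> R by rewrite mulr_gt0 ?subr_gt0.
    have q1 : 0 < (s1%:~R - s0%:~R) * (L - p) :> R by rewrite mulr_gt0 ?subr_gt0.
    by apply/andP; split; lra.
- have s_le : s0 <= s1.
    case: slopes => [[/eqP s_eq _] | [s_lt _]].
    + by rewrite subr_eq0 in s_eq; rewrite (eqP s_eq).
    + by rewrite -subr_le0 ltW.
  move=> t t_in; rewrite two_pieces_ord //.
  by case: (t == p); rewrite ?subr_ge0.
Qed.

End TwoPieces.
End Slopes.

Theorem lemma2p18 (R : realType) (G : mgraph R) (D : divisor G)
    (f : point G -> R) :
  connected_mgraph G ->
  vertex_supported D ->
  rational_function f ->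
  at_most_two_pieces f ->
  in_RD D f <->
  ((forall i : 'I_(nv G),
      0 <= D (Vtx i) + \sum_(j | src j == i) slope1 f j
                       + \sum_(j | tgt j == i) slope2 f j) /\
   (forall j : 'I_(ne G),
      let a1 := f (Vtx (src j)) in
      let a2 := f (Vtx (tgt j)) in
      let s1 := slope1 f j in
      let s2 := slope2 f j in
      (s1 + s2 = 0 /\ a1 - a2 + s1%:~R * len j = 0) \/
      (s1 + s2 < 0 /\ s2%:~R * len j < a1 - a2 < - s1%:~R * len j))).
Proof.
move=> _ D_vtx _ f2.
have edge_cond j := @two_pieces_interior_ord_ge0 R (edgef f j) (len j).
have f_src j : f (Vtx (src j)) = edgef f j 0 by rewrite /edgef /pt lexx.
have f_tgt j : f (Vtx (tgt j)) = edgef f j (len j).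
  by rewrite /edgef /pt leNgt len_gt0 /= lexx.
have edge_split j : exists p s0 s1, two_pieces (edgef f j) (len j) p s0 s1.
  by have [k [k_le2 fk]] := f2 j; exact: pl_pieces_le2 (len_gt0 j) k_le2 fk.
split=> [RD | [vtx_cond edge_slopes]].
- split=> [i | j]; first by have := RD (Vtx i) I; rewrite /= addrA.
  have [p [s0 [s1 g2]]] := edge_split j.
  rewrite /= f_src f_tgt; apply/(edge_cond j _ _ _ g2) => t t_in.
  by have := RD (Inn j t) t_in; rewrite /= D_vtx add0r.
- case=> [i _ | j t t_in] /=; first by rewrite addrA; apply: vtx_cond.
  have [p [s0 [s1 g2]]] := edge_split j.
  have := edge_slopes j; rewrite /= f_src f_tgt => /(edge_cond j _ _ _ g2).
  by rewrite D_vtx add0r; apply.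
Qed.
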